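(* Let $N\ge1$ be an integer, $D>0$, and $q:=\sum_{k=0}^{N}2^{(2k)^3}$. The family of groups $\Gamma$ which admit a proper isometric action on some simply connected length space $(X,d)$ such that $\operatorname{diam}(\Gamma\backslash X)\le D$ and $\#\Sigma_{2D}(x)\le N$ for at least one $x\in X$, has cardinality at most $q$ up to group isomorphism.
   Context: An isometric action of a group $\Gamma$ on a metric space $(X,d)$ is proper if for every $R>0$ and $x\in X$ the set $\{\gamma\in\Gamma: d(x,\gamma x)\le R\}$ is finite. $\operatorname{diam}(\Gamma\backslash X)$ is the diameter of the quotient for the quotient distance $\bar d(\Gamma x,\Gamma y)=\inf_{\gamma\in\Gamma}d(x,\gamma y)$. For $x\in X$ and $R>0$, $\Sigma_R(x):=\{\gamma\in\Gamma: d(x,\gamma x)\le R\}$. *)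

From Stdlib Require Import Reals List Arith.
Import ListNotations.
Open Scope R_scope.

Record Group : Type := MkGroup {
  carrier :> Type;
  gmul : carrier -> carrier -> carrier;
  gone : carrier;
  ginv : carrier -> carrier;
  gmulA : forall a b c, gmul a (gmul b c) = gmul (gmul a b) c;
  gmul1l : forall a, gmul gone a = a;
  gmul1r : forall a, gmul a gone = a;
  gmulVl : forall a, gmul (ginv a) a = gone;
  gmulVr : forall a, gmul a (ginv a) = gone
}.

Definition group_iso (G H : Group) : Prop :=
  exists f : G -> H,
    (forall a b, f (gmul G a b) = gmul H (f a) (f b)) /\
    (forall a b, f a = f b -> a = b) /\
    (forall y, exists a, f a = y).

Definition is_metric (X : Type) (d : X -> X -> R) : Prop :=
  (forall x y, 0 <= d x y) /\
  (forall x y, d x y = 0 <-> x = y) /\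
  (forall x y, d x y = d y x) /\
  (forall x y z, d x z <= d x y + d y z).

Definition in01 (t : R) : Prop := 0 <= t <= 1.

Definition cont_path {X : Type} (d : X -> X -> R) (g : R -> X) : Prop :=
  forall t, in01 t -> forall eps, 0 < eps -> exists delta, 0 < delta /\
    forall s, in01 s -> Rabs (s - t) < delta -> d (g s) (g t) < eps.

Definition cont_square {X : Type} (d : X -> X -> R) (H : R -> R -> X) : Prop :=
  forall s t, in01 s -> in01 t -> forall eps, 0 < eps -> exists delta, 0 < delta /\
    forall s' t', in01 s' -> in01 t' -> Rabs (s' - s) < delta -> Rabs (t' - t) < delta ->
      d (H s' t') (H s t) < eps.

Fixpoint Rsum_upto (f : nat -> R) (n : nat) : R :=
  match n with
  | O => 0
  | S m => Rsum_upto f m + f m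
  end.

Definition length_le {X : Type} (d : X -> X -> R) (g : R -> X) (L : R) : Prop :=
  forall (n : nat) (t : nat -> R),
    t O = 0 -> t n = 1 -> (forall i, (i < n)%nat -> t i <= t (S i)) ->
    Rsum_upto (fun i => d (g (t i)) (g (t (S i)))) n <= L.

(** length space: d(x,y) is the infimum of lengths of continuous paths from x to y
    (lengths are always >= d(x,y), so it suffices to state the approximation). *)
Definition length_space (X : Type) (d : X -> X -> R) : Prop :=
  forall x y eps, 0 < eps -> exists g : R -> X,
    cont_path d g /\ g 0 = x /\ g 1 = y /\ length_le d g (d x y + eps).

Definition path_connected (X : Type) (d : X -> X -> R) : Prop :=
  (exists x : X, True) /\
  forall x y : X, exists g : R -> X, cont_path d g /\ g 0 = x /\ g 1 = y.

Definition simply_connected (X : Type) (d : X -> X -> R) : Prop :=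
  path_connected X d /\
  forall g : R -> X, cont_path d g -> g 0 = g 1 ->
    exists H : R -> R -> X, cont_square d H /\
      (forall t, in01 t -> H 0 t = g t) /\
      (forall t, in01 t -> H 1 t = g 0) /\
      (forall s, in01 s -> H s 0 = g 0 /\ H s 1 = g 0).

Definition finite_pred {T : Type} (P : T -> Prop) : Prop :=
  exists l : list T, forall a, P a -> In a l.

Definition card_le {T : Type} (P : T -> Prop) (N : nat) : Prop :=
  exists l : list T, (length l <= N)%nat /\ forall a, P a -> In a l.

Definition isometric_action (G : Group) (X : Type) (d : X -> X -> R)
    (act : G -> X -> X) : Prop :=
  (forall x, act (gone G) x = x) /\
  (forall a b x, act (gmul G a b) x = act a (act b x)) /\
  (forall a x y, d (act a x) (act a y) = d x y).

Definition proper_action (G : Group) (X : Type) (d : X -> X -> R)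
    (act : G -> X -> X) : Prop :=
  forall (r : R) (x : X), 0 < r -> finite_pred (fun a : G => d x (act a x) <= r).

(** diam(G\X) <= D for the quotient distance inf_a d(x, a y) *)
Definition quotient_diam_le (G : Group) (X : Type) (d : X -> X -> R)
    (act : G -> X -> X) (D : R) : Prop :=
  forall x y eps, 0 < eps -> exists a : G, d x (act a y) < D + eps.

Definition Sigma (G : Group) (X : Type) (d : X -> X -> R)
    (act : G -> X -> X) (r : R) (x : X) : G -> Prop :=
  fun a => d x (act a x) <= r.

Definition admissible (N : nat) (D : R) (G : Group) : Prop :=
  exists (X : Type) (d : X -> X -> R) (act : G -> X -> X),
    is_metric X d /\ length_space X d /\ simply_connected X d /\
    isometric_action G X d act /\ proper_action G X d act /\
    quotient_diam_le G X d act D /\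
    exists x : X, card_le (Sigma G X d act (2 * D) x) N.

Definition qbound (N : nat) : nat :=
  list_sum (map (fun k => 2 ^ ((2 * k) ^ 3)) (seq 0 (S N)))%nat.

(** Let Γ act properly and isometrically on a simply connected length space X
  with diam(Γ\X) <= D, fix x in X and put S := Σ_{2D}(x).  We show that Γ is
  determined up to isomorphism by the multiplication table of S, and count
  the possible tables.

  - By properness there is δ > 0 such that no orbit point γx lies at a
    distance in (2D, 2D + 3δ) from x ([orbit_gap]).  By the diameter bound
    every point of X is within D + δ of some orbit point γx (γ "labels" the
    point), and labels of points at distance < δ differ by an element of S.
  - Sliding labels along a path from x to γx writes γ as a product of
    elements of S ([S_chain_exists]); this needs uniform continuity of paths
    and homotopies, proved by continuous induction on [0,1].
  - Let φ : S -> H respect the products that stay inside S.  Its holonomy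
    ∏ φ(c_i⁻¹ c_(i+1)) along a closed S-chain c is trivial
    ([closed_chain_holonomy]): realise the chain by a loop in X, contract the
    loop, discretise the homotopy finely and sweep it one δ-fine row at a time
    ([ladder], [grid_holonomy]).  Hence φ extends to a homomorphism Γ -> H
    ([local_hom_extends]), uniquely ([hom_determined_by_S]).
  - Two groups with the same table on S thus get mutually inverse
    homomorphisms ([same_code_iso]).  A table for |S| = k is a list of k²
    indices at most k, and there are at most 2^((2k)^3) of them; choosing one
    group per table gives the bound [qbound N] ([codes_length]).
*)

From Stdlib Require Import Reals List Arith Lra Lia Classical ClassicalEpsilon.
Open Scope R_scope.

Local Infix "**" := (gmul _) (at level 40, left associativity).

(** ** Elementary group theory *)

Section GroupFacts.
Variable G : Group.
Implicit Types a b c : G.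

Lemma gcancel_l a b c : a ** b = a ** c -> b = c.
Proof.
  intro E. rewrite <- (gmul1l G b), <- (gmul1l G c), <- (gmulVl G a), <- !gmulA, E.
  reflexivity.
Qed.

Lemma gidem a : a ** a = a -> a = gone G.
Proof. intro E. apply (gcancel_l a). rewrite E, gmul1r. reflexivity. Qed.

Lemma ginv_unique a b : a ** b = gone G -> b = ginv G a.
Proof. intro E. apply (gcancel_l a). rewrite E, gmulVr. reflexivity. Qed.

Lemma ginv_one : ginv G (gone G) = gone G.
Proof. symmetry. apply ginv_unique, gmul1l. Qed.

Lemma ginv_mul a b : ginv G (a ** b) = ginv G b ** ginv G a.
Proof.
  symmetry. apply ginv_unique.
  rewrite gmulA, <- (gmulA _ a b), gmulVr, gmul1r, gmulVr. reflexivity.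
Qed.

Lemma ginv_inv a : ginv G (ginv G a) = a.
Proof. symmetry. apply ginv_unique, gmulVl. Qed.

Lemma incr_trans a b c : (ginv G a ** b) ** (ginv G b ** c) = ginv G a ** c.
Proof. rewrite !gmulA, <- (gmulA _ _ b), gmulVr, gmul1r. reflexivity. Qed.

Lemma incr_translate a b c : ginv G (a ** b) ** (a ** c) = ginv G b ** c.
Proof.
  rewrite ginv_mul, !gmulA, <- (gmulA _ _ (ginv G a)), gmulVl, gmul1r. reflexivity.
Qed.

Lemma incr_rev a b : ginv G b ** a = ginv G (ginv G a ** b).
Proof. rewrite ginv_mul, ginv_inv. reflexivity. Qed.

End GroupFacts.

Definition is_hom (G H : Group) (f : G -> H) : Prop := forall a b, f (a ** b) = f a ** f b.

Lemma hom_one (G H : Group) (f : G -> H) : is_hom G H f -> f (gone G) = gone H.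
Proof. intro Hf. apply gidem. rewrite <- Hf, gmul1l. reflexivity. Qed.

Fixpoint gprod (H : Group) (f : nat -> H) (n : nat) : H :=
  match n with O => gone H | S m => gprod H f m ** f m end.

Section Products.
Variable H : Group.

Lemma gprod_ext f g n :
  (forall i, (i < n)%nat -> f i = g i) -> gprod H f n = gprod H g n.
Proof.
  induction n as [|n IH]; simpl; intro E; auto.
  rewrite IH, E by (intros; try apply E; lia). reflexivity.
Qed.

Lemma gprod_add f a b :
  gprod H f (a + b) = gprod H f a ** gprod H (fun j => f (a + j)%nat) b.
Proof.
  induction b as [|b IH]; simpl.
  - rewrite Nat.add_0_r, gmul1r. reflexivity.
  - rewrite Nat.add_succ_r. simpl. rewrite IH, gmulA. reflexivity.
Qed.

Lemma gprod_blocks f n k :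
  gprod H f (n * k) = gprod H (fun i => gprod H (fun j => f (i * k + j)%nat) k) n.
Proof.
  induction n as [|n IH]; simpl; auto.
  rewrite Nat.add_comm, gprod_add, IH. reflexivity.
Qed.

Lemma gprod_trivial f n :
  (forall i, (i < n)%nat -> f i = gone H) -> gprod H f n = gone H.
Proof.
  induction n as [|n IH]; simpl; intro E; auto.
  rewrite IH, E by (intros; try apply E; lia). apply gmul1l.
Qed.

Lemma gprod_inv f m :
  gprod H (fun j => ginv H (f (m - 1 - j)%nat)) m = ginv H (gprod H f m).
Proof.
  revert f. induction m as [|m IH]; intro f.
  - simpl. rewrite ginv_one. reflexivity.
  - transitivity (ginv H (f m) ** ginv H (gprod H f m)).
    2: { cbn [gprod]. rewrite ginv_mul. reflexivity. }
    replace (S m) with (1 + m)%nat by lia. rewrite gprod_add.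
    cbn [gprod]. rewrite gmul1l. f_equal.
    + do 2 f_equal. lia.
    + rewrite <- IH. apply gprod_ext. intros i Hi. do 2 f_equal. lia.
Qed.

End Products.

(** ** Uniform continuity on [0,1] and [0,1]² *)

Lemma continuous_induction (P : R -> Prop) :
  (forall a b, a <= b -> P b -> P a) ->
  (forall c, c < 0 -> P c) ->
  (forall c, in01 c -> exists r, 0 < r /\ forall c', c - r < c' -> P c' -> P (c + r)) ->
  P 1.
Proof.
  intros Hmono Hneg Hstep. apply NNPP; intro N1.
  assert (Hlt : forall c, P c -> c < 1).
  { intros c Pc. destruct (Rlt_or_le c 1); auto. exfalso. apply N1, (Hmono 1 c); auto. }
  assert (Hb : bound P) by (exists 1; intros c Pc; left; apply Hlt; auto).
  assert (He : exists x, P x) by (exists (-1); apply Hneg; lra).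
  destruct (completeness P Hb He) as [m [Hub Hlub]].
  assert (Hm1 : m <= 1) by (apply Hlub; intros c Pc; left; apply Hlt; auto).
  destruct (Rlt_or_le m 0) as [Hm0|Hm0].
  - destruct (Hstep 0) as [r [Hr Hs]]; [split; lra|].
    assert (P (0 + r)) by (apply (Hs (- r / 2)); [lra | apply Hneg; lra]).
    assert (0 + r <= m) by (apply Hub; auto). lra.
  - destruct (Hstep m) as [r [Hr Hs]]; [split; lra|].
    assert (Hc' : exists c', m - r < c' /\ P c').
    { apply NNPP; intro Hn.
      assert (m <= m - r).
      { apply Hlub. intros c Pc. destruct (Rle_or_lt c (m - r)); auto.
        exfalso; apply Hn; exists c; auto. }
      lra. }
    destruct Hc' as [c' [H1 H2]].
    assert (m + r <= m) by (apply Hub; apply (Hs c'); auto). lra.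
Qed.

Lemma straddle u v c c' r :
  c - r < c' -> u <= c + r -> v <= c + r -> Rabs (u - v) < r ->
  ~ (u <= c' /\ v <= c') -> Rabs (u - c) < 2 * r /\ Rabs (v - c) < 2 * r.
Proof.
  intros Hc' Hu Hv Huv Hn. destruct (Rabs_def2 _ _ Huv).
  assert (c' < u \/ c' < v).
  { destruct (Rle_or_lt u c'); destruct (Rle_or_lt v c'); auto. tauto. }
  split; apply Rabs_def1; lra.
Qed.

(** This is the
    compactness of [0,1] in the form needed twice below. *)
Lemma uniform_from_local (F : R -> R -> R -> Prop) :
  (forall r r' u v, 0 < r' <= r -> F r u v -> F r' u v) ->
  (forall c, in01 c -> exists r, 0 < r /\
     forall u v, in01 u -> in01 v -> Rabs (u - c) < r -> Rabs (v - c) < r -> F r u v) ->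
  exists rho, 0 < rho /\
    forall u v, in01 u -> in01 v -> Rabs (u - v) < rho -> F rho u v.
Proof.
  intros Hanti Hloc.
  set (P := fun c => exists rho, 0 < rho /\ forall u v, in01 u -> in01 v ->
              u <= c -> v <= c -> Rabs (u - v) < rho -> F rho u v).
  assert (HP1 : P 1).
  { apply continuous_induction.
    - intros a b Hab [rho [Hr Hp]]. exists rho; split; auto. intros; apply Hp; auto; lra.
    - intros c Hc. exists 1; split; [lra|]. intros u v [Hu _]. lra.
    - intros c Hc. destruct (Hloc c Hc) as [r [Hr Hr']].
      exists (r / 2); split; [lra|].
      intros c' Hc' [rho' [Hrho' Hp']].
      set (rho := Rmin rho' (r / 2)).
      assert (0 < rho) by (apply Rmin_pos; lra).
      assert (rho <= rho') by apply Rmin_l. assert (rho <= r / 2) by apply Rmin_r.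
      exists rho; split; auto. intros u v Hu Hv Huc Hvc Huv.
      destruct (classic (u <= c' /\ v <= c')) as [[? ?]|Hn].
      + apply (Hanti rho'); [lra|]. apply Hp'; auto. lra.
      + destruct (straddle u v c c' (r / 2)) as [A B]; auto; try lra.
        apply (Hanti r); [lra|]. apply Hr'; auto; lra. }
  destruct HP1 as [rho [Hr Hp]]. exists rho; split; auto.
  intros u v Hu Hv; apply Hp; auto; [destruct Hu | destruct Hv]; lra.
Qed.

Section Metric.
Variables (X : Type) (d : X -> X -> R).
Hypothesis Hm : is_metric X d.

Lemma dsym x y : d x y = d y x.
Proof. destruct Hm as [_ [_ [H _]]]. auto. Qed.
Lemma dtri x y z : d x z <= d x y + d y z.
Proof. destruct Hm as [_ [_ [_ H]]]. auto. Qed.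
Lemma dself x : d x x = 0.
Proof. destruct Hm as [_ [H _]]. apply H; auto. Qed.

Lemma dist_via x y z e : d x z < e / 2 -> d y z < e / 2 -> d x y < e.
Proof. intros. pose proof (dtri x z y). rewrite (dsym z y) in *. lra. Qed.

Lemma square_unif_continuous (K : R -> R -> X) : cont_square d K ->
  forall eps, 0 < eps -> exists rho, 0 < rho /\
    forall s t s' t', in01 s -> in01 t -> in01 s' -> in01 t' ->
      Rabs (s - s') < rho -> Rabs (t - t') < rho -> d (K s t) (K s' t') < eps.
Proof.
  intros Hc eps He.
  (* uniformity in [t], locally in [s] *)
  assert (Hcol : forall s0, in01 s0 -> exists r, 0 < r /\
    forall t t', in01 t -> in01 t' -> Rabs (t - t') < r ->
      forall s s', in01 s -> in01 s' -> Rabs (s - s0) < r -> Rabs (s' - s0) < r ->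
        d (K s t) (K s' t') < eps).
  { intros s0 Hs0.
    apply (uniform_from_local (fun r t t' => forall s s', in01 s -> in01 s' ->
             Rabs (s - s0) < r -> Rabs (s' - s0) < r -> d (K s t) (K s' t') < eps)).
    - intros r r' t t' Hr Hp s s' Hs Hs' H1 H2. apply Hp; auto; lra.
    - intros c Hc0. destruct (Hc s0 c Hs0 Hc0 (eps / 2)) as [r [Hr Hr']]; [lra|].
      exists r; split; [lra|]. intros t t' Ht Ht' H1 H2 s s' Hs Hs' H3 H4.
      apply dist_via with (K s0 c); apply Hr'; auto. }
  destruct (uniform_from_local (fun r s s' => forall t t', in01 t -> in01 t' ->
              Rabs (t - t') < r -> d (K s t) (K s' t') < eps)) as [rho [Hr Hp]].
  - intros r r' s s' Hr Hp t t' Ht Ht' H. apply Hp; auto; lra.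
  - intros c Hc0. destruct (Hcol c Hc0) as [r [Hr Hr']].
    exists r; split; [lra|]. intros s s' Hs Hs' H1 H2 t t' Ht Ht' H3. apply Hr'; auto.
  - exists rho; split; [lra|]. intros s t s' t' Hs Ht Hs' Ht' H1 H2. apply Hp; auto.
Qed.

(** Heine's theorem for paths, seen as squares constant in the first variable. *)
Lemma path_unif_continuous (g : R -> X) : cont_path d g ->
  forall eps, 0 < eps -> exists rho, 0 < rho /\
    forall s t, in01 s -> in01 t -> Rabs (s - t) < rho -> d (g s) (g t) < eps.
Proof.
  intros Hg eps He.
  destruct (square_unif_continuous (fun _ t => g t)) with eps as [rho [Hr Hp]]; auto.
  - intros s t Hs Ht e He'. destruct (Hg t Ht e He') as [r [Hr Hp]].
    exists r; split; [lra|]. intros s' t' _ Ht' _ H. apply Hp; auto.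
  - exists rho; split; [lra|]. intros s t Hs Ht H.
    apply (Hp 0 s 0 t); auto; try (split; lra). rewrite Rminus_0_r, Rabs_R0. lra.
Qed.

Lemma length_le_via (g : R -> X) L t :
  length_le d g L -> in01 t -> d (g 0) (g t) + d (g t) (g 1) <= L.
Proof.
  intros Hl [Ht0 Ht1].
  set (tf := fun k : nat => match k with O => 0 | 1%nat => t | _ => 1 end).
  specialize (Hl 2%nat tf eq_refl eq_refl).
  replace (d (g 0) (g t) + d (g t) (g 1))
    with (Rsum_upto (fun i => d (g (tf i)) (g (tf (S i)))) 2) by (simpl; ring).
  apply Hl. intros [|[|i]] Hi; simpl; lra || lia.
Qed.

End Metric.

(** ** Subdivisions of [0,1] and concatenation of paths *)

Lemma nat_lt_INR a b : (a < b)%nat -> INR a + 1 <= INR b.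
Proof. intro. rewrite <- S_INR. apply le_INR. lia. Qed.

Lemma INR_pred n : (1 <= n)%nat -> INR (n - 1) + 1 = INR n.
Proof. intro. rewrite <- S_INR. f_equal. lia. Qed.

Lemma divmod_eq i u K : (u < K)%nat -> ((i * K + u) / K = i /\ (i * K + u) mod K = u)%nat.
Proof.
  intro. split.
  - symmetry. apply (Nat.div_unique _ _ _ u); auto. lia.
  - symmetry. apply (Nat.mod_unique _ _ i); auto. lia.
Qed.

Fixpoint pidx (m : nat) (u : R) : nat :=
  match m with
  | O => O
  | S m' => if Rle_dec (INR (S m')) u then S m' else pidx m' u
  end.

Lemma pidx_spec m u : 0 <= u ->
  (pidx m u <= m)%nat /\ INR (pidx m u) <= u /\ (u < INR (pidx m u) + 1 \/ pidx m u = m).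
Proof.
  intro Hu. induction m as [|m IH]; cbn [pidx].
  - split; [lia | split]; [simpl; lra | auto].
  - destruct (Rle_dec (INR (S m)) u) as [Hle|Hgt].
    + split; [lia | split; auto].
    + destruct IH as [A [B C]]. split; [lia | split; auto]. left.
      destruct C as [C|C]; auto. rewrite C. rewrite S_INR in Hgt. lra.
Qed.

Lemma pidx_eq m u i : 0 <= u -> (i <= m)%nat -> INR i <= u -> (u < INR i + 1 \/ i = m) ->
  pidx m u = i.
Proof.
  intros Hu Him Hi1 Hi2. destruct (pidx_spec m u Hu) as [A [B C]].
  destruct (lt_eq_lt_dec (pidx m u) i) as [[Hlt|Heq]|Hlt]; auto.
  - destruct C as [C|C]; [|lia]. pose proof (nat_lt_INR _ _ Hlt). lra.
  - destruct Hi2 as [C'|C']; [|lia]. pose proof (nat_lt_INR _ _ Hlt). lra.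
Qed.

Lemma fin_min (P : nat -> R -> Prop) n :
  (forall i r r', P i r -> 0 < r' <= r -> P i r') ->
  (forall i, (i < n)%nat -> exists r, 0 < r /\ P i r) ->
  exists r, 0 < r /\ forall i, (i < n)%nat -> P i r.
Proof.
  intros Hm. induction n as [|n IH]; intros Hp.
  - exists 1; split; [lra|]. intros; lia.
  - destruct IH as [r1 [H1 H1']]. { intros; apply Hp; lia. }
    destruct (Hp n) as [r2 [H2 H2']]; [lia|].
    assert (0 < Rmin r1 r2) by (apply Rmin_pos; auto).
    exists (Rmin r1 r2); split; auto. intros i Hi.
    destruct (Nat.eq_dec i n) as [->|].
    + apply (Hm _ r2); auto. split; auto. apply Rmin_r.
    + apply (Hm _ r1); [apply H1'; lia|]. split; auto; apply Rmin_l.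
Qed.

Lemma small_step rho : 0 < rho -> exists K : nat, (1 <= K)%nat /\ 1 / INR K < rho.
Proof.
  intro Hr. destruct (INR_unbounded (Rmax 1 (1 / rho))) as [K HK].
  pose proof (Rmax_l 1 (1 / rho)). pose proof (Rmax_r 1 (1 / rho)).
  assert (1 <= K)%nat by (destruct K; [simpl in HK; lra | lia]).
  exists K; split; auto.
  assert (0 < INR K) by lra.
  apply (Rmult_lt_reg_r (INR K)); auto. unfold Rdiv. rewrite Rmult_1_l, Rinv_l by lra.
  apply (Rmult_lt_reg_l (/ rho)). apply Rinv_0_lt_compat; auto.
  rewrite <- Rmult_assoc, Rinv_l, Rmult_1_l, Rmult_1_r by lra. unfold Rdiv in *. lra.
Qed.

Lemma fine_refinement rho n : 0 < rho -> (1 <= n)%nat ->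
  exists K0 : nat, (1 <= K0)%nat /\ 1 / INR (n * K0) < rho.
Proof.
  intros Hr Hn. destruct (small_step rho Hr) as [K0 [HK0 HK0r]].
  exists K0. split; auto. eapply Rle_lt_trans; [|apply HK0r]. unfold Rdiv.
  rewrite !Rmult_1_l. apply Rinv_le_contravar; [apply lt_0_INR; lia | apply le_INR; nia].
Qed.

Lemma in01_frac k M : (0 < M)%nat -> (k <= M)%nat -> in01 (INR k / INR M).
Proof.
  intros. assert (0 < INR M) by (apply lt_0_INR; auto). split.
  - apply Rle_mult_inv_pos; [apply pos_INR | auto].
  - apply (Rmult_le_reg_r (INR M)); auto.
    unfold Rdiv. rewrite Rmult_assoc, Rinv_l, Rmult_1_r, Rmult_1_l by lra. apply le_INR; auto.
Qed.

Lemma frac_close k k' M rho : (0 < M)%nat -> 1 / INR M < rho -> (k' = k \/ k' = S k) ->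
  Rabs (INR k / INR M - INR k' / INR M) < rho.
Proof.
  intros HM Hr Hk. assert (0 < INR M) by (apply lt_0_INR; auto).
  assert (0 < 1 / INR M) by (apply Rdiv_lt_0_compat; lra).
  destruct Hk as [->| ->].
  - unfold Rminus. rewrite Rplus_opp_r, Rabs_R0. lra.
  - rewrite S_INR. replace (INR k / INR M - (INR k + 1) / INR M) with (- (1 / INR M))
      by (field; lra).
    rewrite Rabs_Ropp, Rabs_right; lra.
Qed.

Section Concatenation.
Variables (X : Type) (d : X -> X -> R).
Hypothesis Hm : is_metric X d.

(** The concatenation of the paths [seg 0], ..., [seg (n-1)], each run in
    time [1/n]. *)
Definition lpath (n : nat) (seg : nat -> R -> X) (t : R) : X :=
  seg (pidx (n - 1) (INR n * t)) (INR n * t - INR (pidx (n - 1) (INR n * t))).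

Lemma lpath_at n seg i p t : (1 <= n)%nat -> (i <= n - 1)%nat -> 0 <= p ->
  (p < 1 \/ i = (n - 1)%nat) -> INR n * t = INR i + p -> lpath n seg t = seg i p.
Proof.
  intros Hn Hi Hp Hp1 Ht. unfold lpath. rewrite Ht. pose proof (pos_INR i).
  rewrite (pidx_eq (n - 1) (INR i + p) i); try lra; auto.
  - f_equal. ring.
  - destruct Hp1; [left; lra | right; auto].
Qed.

Lemma lpath_local n seg t t' : (1 <= n)%nat -> in01 t -> in01 t' -> t <= t' ->
  INR n * (t' - t) < 1 ->
  exists i u u', (i < n)%nat /\ in01 u /\ in01 u' /\ lpath n seg t = seg i u /\
    ((lpath n seg t' = seg i u' /\ u' - u = INR n * (t' - t)) \/
     ((S i < n)%nat /\ lpath n seg t' = seg (S i) u' /\ 1 - u + u' = INR n * (t' - t))).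
Proof.
  intros Hn [Ht0 Ht1] [Ht0' Ht1'] Htt Hd. unfold lpath.
  pose proof (INR_pred n Hn) as Hnp.
  set (v := INR n * t). set (v' := INR n * t').
  assert (0 <= INR n) by apply pos_INR.
  assert (Hv0 : 0 <= v) by (unfold v; nra).
  assert (Hvv : v <= v') by (unfold v, v'; nra).
  assert (Hv1 : v' <= INR n) by (unfold v'; nra).
  assert (Hdv : v' - v < 1) by (unfold v, v'; nra).
  destruct (pidx_spec (n - 1) v Hv0) as [A1 [B1 C1]].
  destruct (pidx_spec (n - 1) v' ltac:(lra)) as [A2 [B2 C2]].
  set (i := pidx (n - 1) v) in *. set (i' := pidx (n - 1) v') in *.
  assert (Hu1 : v - INR i <= 1) by (destruct C1 as [C1|C1]; [lra | rewrite C1; lra]).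
  assert (Hu1' : v' - INR i' <= 1) by (destruct C2 as [C2|C2]; [lra | rewrite C2; lra]).
  exists i, (v - INR i), (v' - INR i').
  split; [lia | split; [split; lra | split; [split; lra | split; auto]]].
  assert (Hii : (i <= i')%nat).
  { destruct (le_lt_dec i i') as [?|Hlt]; auto. exfalso.
    destruct C2 as [C2|C2]; [|lia]. pose proof (nat_lt_INR _ _ Hlt). lra. }
  assert (Hii' : (i' <= S i)%nat).
  { destruct (le_lt_dec i' (S i)) as [?|Hlt]; auto. exfalso.
    destruct C1 as [C1|C1]; [|lia]. pose proof (nat_lt_INR _ _ Hlt) as HH.
    rewrite S_INR in HH. lra. }
  destruct (Nat.eq_dec i' i) as [Heq|Hne].
  - left. rewrite Heq. split; [reflexivity|]. unfold v, v'. ring.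
  - right. assert (Hi' : i' = S i) by lia. rewrite Hi', S_INR.
    split; [lia | split; [reflexivity|]]. unfold v, v'. ring.
Qed.

Lemma lpath_continuous n seg : (1 <= n)%nat ->
  (forall i, (i < n)%nat -> cont_path d (seg i)) ->
  (forall i, (S i < n)%nat -> seg i 1 = seg (S i) 0) ->
  cont_path d (lpath n seg).
Proof.
  intros Hn Hc Hl t Ht eps He.
  destruct (fin_min (fun i r => forall s t, in01 s -> in01 t -> Rabs (s - t) < r ->
              d (seg i s) (seg i t) < eps / 2) n) as [r [Hr Hr']].
  { intros i r r' Hp Hr s t' Hs Ht' Hst. apply Hp; auto. lra. }
  { intros i Hi. apply path_unif_continuous; auto. lra. }
  assert (HnR : 0 < INR n) by (apply lt_0_INR; lia).
  set (r0 := Rmin r 1).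
  assert (0 < r0) by (apply Rmin_pos; lra).
  assert (r0 <= r) by apply Rmin_l. assert (r0 <= 1) by apply Rmin_r.
  assert (Hclose : forall t t', in01 t -> in01 t' -> t <= t' -> t' - t < r0 / INR n ->
            d (lpath n seg t) (lpath n seg t') < eps).
  { intros t1 t2 Ht1 Ht2 Ht12 Hd.
    assert (Hnd : INR n * (t2 - t1) < r0).
    { apply (Rmult_lt_reg_l (/ INR n)); [apply Rinv_0_lt_compat; auto|].
      rewrite <- Rmult_assoc, Rinv_l, Rmult_1_l by lra. unfold Rdiv in Hd. lra. }
    assert (0 <= INR n * (t2 - t1)) by nra.
    destruct (lpath_local n seg t1 t2) as [i [u [u' [Hi [Hu [Hu' [E [[E' Hd'] | [Hi' [E' Hd']]]]]]]]]];
      auto; try lra; rewrite E, E'.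
    - apply (Rlt_trans _ (eps / 2)); [|lra]. apply Hr'; auto.
      rewrite Rabs_left1; lra.
    - apply dist_via with (seg i 1); auto.
      + apply Hr'; auto; [split; lra|]. rewrite Rabs_left1; destruct Hu, Hu'; lra.
      + rewrite Hl by auto. apply Hr'; auto; [split; lra|].
        rewrite Rabs_right; destruct Hu, Hu'; lra. }
  exists (r0 / INR n); split; [apply Rdiv_lt_0_compat; auto|].
  intros s Hs Hst. destruct (Rle_or_lt s t).
  - apply Hclose; auto. rewrite Rabs_left1 in Hst; lra.
  - rewrite dsym by auto. apply Hclose; auto; [lra|]. rewrite Rabs_right in Hst; lra.
Qed.

End Concatenation.

Arguments lpath {X} n seg t.
Arguments lpath_at {X} n seg i p t.

(** ** From local to global homomorphisms *)

Section LocalToGlobal.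
Variables (G : Group) (X : Type) (d : X -> X -> R) (act : G -> X -> X).
Variables (D delta : R) (x0 : X).
Hypotheses (Hmet : is_metric X d) (Hlen : length_space X d) (Hsc : simply_connected X d).
Hypotheses (Hact : isometric_action G X d act) (HD : 0 <= D) (Hdl : 0 < delta).
Hypothesis Hdiam : quotient_diam_le G X d act D.
Hypothesis Hgap : forall a, d x0 (act a x0) < 2 * D + 3 * delta -> d x0 (act a x0) <= 2 * D.

Definition inS (a : G) : Prop := d x0 (act a x0) <= 2 * D.
Definition label (y : X) (a : G) : Prop := d y (act a x0) < D + delta.

Lemma act_one x : act (gone G) x = x.
Proof. destruct Hact as [H _]; auto. Qed.
Lemma act_mul a b x : act (a ** b) x = act a (act b x).
Proof. destruct Hact as [_ [H _]]; auto. Qed.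
Lemma act_iso a x y : d (act a x) (act a y) = d x y.
Proof. destruct Hact as [_ [_ H]]; auto. Qed.

Lemma orbit_dist a b : d (act a x0) (act b x0) = d x0 (act (ginv G a ** b) x0).
Proof. rewrite <- (act_iso a x0), <- act_mul, gmulA, gmulVr, gmul1l. reflexivity. Qed.

Lemma inS_one : inS (gone G).
Proof. unfold inS. rewrite act_one, (dself X d Hmet). lra. Qed.

Lemma inS_inv a : inS a -> inS (ginv G a).
Proof.
  unfold inS. intro Ha. rewrite <- (act_iso a), <- act_mul, gmulVr, act_one, dsym; auto.
Qed.

(** Labels of points at distance less than [δ] differ by an element of [S]:
    this is where the gap is used. *)
Lemma close_labels_inS y y' a b :
  label y a -> label y' b -> d y y' < delta -> inS (ginv G a ** b).
Proof.
  unfold label, inS; intros Ha Hb Hyy. apply Hgap. rewrite <- orbit_dist.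
  pose proof (dtri X d Hmet (act a x0) y (act b x0)).
  pose proof (dtri X d Hmet y y' (act b x0)). rewrite (dsym X d Hmet (act a x0) y) in *. lra.
Qed.

Lemma label_self a : label (act a x0) a.
Proof. unfold label. rewrite (dself X d Hmet). lra. Qed.

Lemma label_choice : exists lab : X -> G, (forall y, label y (lab y)) /\ lab x0 = gone G.
Proof.
  assert (Hex : forall y, exists a, label y a) by (intro y; apply (Hdiam y x0 delta Hdl)).
  exists (fun y => if excluded_middle_informative (y = x0) then gone G
           else proj1_sig (constructive_indefinite_description _ (Hex y))).
  split.
  - intro y. destruct (excluded_middle_informative (y = x0)) as [->|].
    + pattern x0 at 1. rewrite <- (act_one x0). apply label_self.
    + apply proj2_sig.
  - destruct (excluded_middle_informative (x0 = x0)); congruence.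
Qed.

Definition S_chain (c : nat -> G) (n : nat) : Prop :=
  forall i, (i < n)%nat -> inS (ginv G (c i) ** c (S i)).

Lemma S_pair p q : inS (ginv G p ** q) ->
  forall u v, (u = p \/ u = q) -> (v = p \/ v = q) -> inS (ginv G u ** v).
Proof.
  intros Hpq u v Hu Hv.
  destruct Hu as [-> | ->], Hv as [-> | ->]; try (rewrite gmulVl; apply inS_one); auto.
  rewrite incr_rev. apply inS_inv; auto.
Qed.

(** [S] generates [Γ]: label the points of a fine subdivision of a path from
    [x0] to [g x0]. *)
Lemma S_chain_exists g : exists c n, S_chain c n /\ c 0%nat = gone G /\ c n = g.
Proof.
  destruct Hsc as [[_ Hpc] _].
  destruct (Hpc x0 (act g x0)) as [p [Hp [Hp0 Hp1]]].
  destruct (path_unif_continuous X d Hmet p Hp delta Hdl) as [rho [Hrho Hrho']].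
  destruct (small_step rho Hrho) as [n [Hn Hnr]].
  destruct label_choice as [lab [Hlab Hlab0]].
  set (c := fun k => if Nat.eq_dec k n then g else lab (p (INR k / INR n))).
  assert (Hc : forall k, (k <= n)%nat -> label (p (INR k / INR n)) (c k)).
  { intros k Hk. unfold c. destruct (Nat.eq_dec k n) as [->|]; auto.
    rewrite Rdiv_diag by (apply not_0_INR; lia). rewrite Hp1. apply label_self. }
  exists c, n. split; [|split].
  - intros i Hi. apply (close_labels_inS (p (INR i / INR n)) (p (INR (S i) / INR n)));
      try apply Hc; try lia.
    apply Hrho'; try apply in01_frac; try lia. apply frac_close; auto; lia.
  - unfold c. destruct (Nat.eq_dec 0 n); [lia|].
    simpl INR. unfold Rdiv. rewrite Rmult_0_l, Hp0. auto.
  - unfold c. destruct (Nat.eq_dec n n); congruence.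
Qed.

Lemma hom_determined_by_S (H : Group) (f g : G -> H) : is_hom G H f -> is_hom G H g ->
  (forall s, inS s -> f s = g s) -> forall a, f a = g a.
Proof.
  intros Hf Hg Hs a. destruct (S_chain_exists a) as [c [n [Hc [Hc0 Hcn]]]].
  assert (Hk : forall k, (k <= n)%nat -> f (c k) = g (c k)).
  { induction k as [|k IH]; intro Hk.
    - rewrite Hc0, !hom_one; auto.
    - replace (c (S k)) with (c k ** (ginv G (c k) ** c (S k)))
        by (rewrite gmulA, gmulVr, gmul1l; reflexivity).
      rewrite Hf, Hg, IH, Hs by (try apply Hc; lia). reflexivity. }
  rewrite <- Hcn. apply Hk. lia.
Qed.

Lemma chain_path c n : S_chain c n -> (1 <= n)%nat ->
  exists lp : R -> X, cont_path d lp /\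
    (forall i, (i <= n)%nat -> lp (INR i / INR n) = act (c i) x0) /\
    (forall i t, (i < n)%nat -> INR i <= INR n * t < INR i + 1 ->
       label (lp t) (c i) \/ label (lp t) (c (S i))).
Proof.
  intros Hc Hn.
  assert (Hex : forall i, exists p, cont_path d p /\ p 0 = act (c i) x0 /\
     p 1 = act (c (S i)) x0 /\ length_le d p (d (act (c i) x0) (act (c (S i)) x0) + delta))
    by (intro; apply Hlen; lra).
  destruct (choice _ Hex) as [seg Hseg].
  assert (HnR : 0 < INR n) by (apply lt_0_INR; lia).
  exists (lpath n seg). split; [|split].
  - apply (lpath_continuous X d Hmet); auto.
    + intros i _. apply Hseg.
    + intros i _. destruct (Hseg i) as [_ [_ [-> _]]], (Hseg (S i)) as [_ [-> _]]. auto.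
  - intros i Hi. destruct (Nat.eq_dec i n) as [->|Hin].
    + rewrite Rdiv_diag by lra. rewrite (lpath_at n seg (n - 1) 1 1); try lia; try lra; auto.
      * destruct (Hseg (n - 1)%nat) as [_ [_ [-> _]]]. do 3 f_equal. lia.
      * rewrite INR_pred by lia. ring.
    + rewrite (lpath_at n seg i 0 _); try lia; try lra; auto.
      * apply Hseg.
      * field. lra.
  - intros i t Hi Ht. rewrite (lpath_at n seg i (INR n * t - INR i) t); try lia; try lra.
    destruct (Hseg i) as [_ [E0 [E1 Hl]]].
    assert (Hp : in01 (INR n * t - INR i)) by (split; lra).
    pose proof (length_le_via X d (seg i) _ _ Hl Hp) as Hvia.
    rewrite E0, E1, orbit_dist in Hvia. specialize (Hc i Hi). unfold inS in Hc.
    unfold label. rewrite (dsym X d Hmet (act (c i) x0)) in Hvia.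
    destruct (Rlt_or_le (d (seg i (INR n * t - INR i)) (act (c i) x0)) (D + delta));
      [left | right]; lra.
Qed.

Lemma frac_refine n K0 i u : (0 < n)%nat -> (0 < K0)%nat ->
  INR n * (INR (i * K0 + u) / INR (n * K0)) = INR i + INR u / INR K0.
Proof.
  intros Hn HK. rewrite plus_INR, !mult_INR. field.
  split; apply not_0_INR; lia.
Qed.

Variables (H : Group) (phi : G -> H).
Hypothesis Hphi : forall s t, inS s -> inS t -> inS (s ** t) -> phi (s ** t) = phi s ** phi t.

Lemma phi_one : phi (gone G) = gone H.
Proof. apply gidem. rewrite <- Hphi; rewrite ?gmul1l; auto; apply inS_one. Qed.

Lemma phi_incr p q r : inS (ginv G p ** q) -> inS (ginv G q ** r) -> inS (ginv G p ** r) ->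
  phi (ginv G p ** r) = phi (ginv G p ** q) ** phi (ginv G q ** r).
Proof. intros. rewrite <- Hphi; auto; rewrite incr_trans; auto. Qed.

Lemma phi_inv s : inS s -> phi (ginv G s) = ginv H (phi s).
Proof.
  intro Hs. apply ginv_unique. rewrite <- Hphi, gmulVr; auto using inS_inv.
  - apply phi_one.
  - rewrite gmulVr. apply inS_one.
Qed.

Definition holonomy (c : nat -> G) (n : nat) : H :=
  gprod H (fun i => phi (ginv G (c i) ** c (S i))) n.

Lemma holonomy_within_S (e : nat -> G) m :
  (forall u v, (u <= m)%nat -> (v <= m)%nat -> inS (ginv G (e u) ** e v)) ->
  holonomy e m = phi (ginv G (e 0%nat) ** e m).
Proof.
  intro Hs. induction m as [|m IH].
  - simpl. rewrite gmulVl, phi_one. reflexivity.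
  - unfold holonomy in *; simpl. rewrite IH by (intros; apply Hs; lia).
    rewrite <- phi_incr; auto; apply Hs; lia.
Qed.

Lemma ladder (y y' : nat -> X) (a b : nat -> G) m :
  (forall i, (i <= m)%nat -> label (y i) (a i) /\ label (y' i) (b i)) ->
  (forall i, (i < m)%nat -> d (y i) (y (S i)) < delta /\ d (y' i) (y' (S i)) < delta /\
                            d (y i) (y' (S i)) < delta) ->
  (forall i, (i <= m)%nat -> d (y i) (y' i) < delta) ->
  holonomy a m ** phi (ginv G (a m) ** b m) = phi (ginv G (a 0%nat) ** b 0%nat) ** holonomy b m.
Proof.
  intros Hl Hc Hd. induction m as [|m IH].
  - simpl. rewrite gmul1l, gmul1r. reflexivity.
  - unfold holonomy in *. simpl.
    rewrite gmulA, <- IH by (intros; try apply Hl; try apply Hc; try apply Hd; lia).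
    destruct (Hl m) as [A1 B1]; [lia|]. destruct (Hl (S m)) as [A2 B2]; [lia|].
    destruct (Hc m) as [C1 [C2 C3]]; [lia|].
    pose proof (Hd m ltac:(lia)). pose proof (Hd (S m) ltac:(lia)).
    rewrite <- !gmulA. f_equal.
    rewrite <- !phi_incr; auto; eapply close_labels_inS; eauto.
Qed.

Lemma holonomy_refine c n b K0 : S_chain c n ->
  (forall i, (i <= n)%nat -> b (i * K0)%nat = c i) ->
  (forall i u, (i < n)%nat -> (u < K0)%nat ->
     b (i * K0 + u)%nat = c i \/ b (i * K0 + u)%nat = c (S i)) ->
  holonomy b (n * K0) = holonomy c n.
Proof.
  intros Hc Hnode Hslot. unfold holonomy at 1. rewrite gprod_blocks.
  apply gprod_ext. intros i Hi.
  set (e := fun u => b (i * K0 + u)%nat).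
  assert (Hnext : e K0 = c (S i)).
  { unfold e. replace (i * K0 + K0)%nat with (S i * K0)%nat by lia. apply Hnode. lia. }
  assert (He : forall u, (u <= K0)%nat -> e u = c i \/ e u = c (S i)).
  { intros u Hu. destruct (Nat.eq_dec u K0) as [->|]; auto. apply Hslot; lia. }
  transitivity (holonomy e K0).
  - apply gprod_ext. intros u Hu. unfold e. rewrite Nat.add_succ_r. reflexivity.
  - rewrite holonomy_within_S by (intros; apply (S_pair (c i) (c (S i))); auto).
    rewrite Hnext. unfold e. rewrite Nat.add_0_r, Hnode by lia. reflexivity.
Qed.

Lemma chain_refinement c n lp K0 : S_chain c n -> (1 <= n)%nat -> (1 <= K0)%nat ->
  (forall i, (i <= n)%nat -> lp (INR i / INR n) = act (c i) x0) ->
  (forall i t, (i < n)%nat -> INR i <= INR n * t < INR i + 1 ->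
     label (lp t) (c i) \/ label (lp t) (c (S i))) ->
  exists b, b 0%nat = c 0%nat /\ b (n * K0)%nat = c n /\
    (forall k, (k <= n * K0)%nat -> label (lp (INR k / INR (n * K0))) (b k)) /\
    holonomy b (n * K0) = holonomy c n.
Proof.
  intros Hc Hn HK Hends Hslot.
  set (b := fun k => if excluded_middle_informative
                          (label (lp (INR k / INR (n * K0))) (c (k / K0)%nat))
                     then c (k / K0)%nat else c (S (k / K0))).
  assert (Hb_node : forall i, (i <= n)%nat -> b (i * K0)%nat = c i).
  { intros i Hi. unfold b. rewrite Nat.div_mul by lia.
    destruct (excluded_middle_informative _) as [|Hno]; auto. exfalso; apply Hno.
    replace (INR (i * K0) / INR (n * K0)) with (INR i / INR n)
      by (rewrite !mult_INR; field; split; apply not_0_INR; lia).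
    rewrite Hends by auto. apply label_self. }
  exists b. split; [|split; [|split]].
  - apply (Hb_node 0%nat). lia.
  - apply Hb_node. lia.
  - intros k Hk. unfold b. destruct (excluded_middle_informative _) as [|Hno]; auto.
    assert (HkM : (k < n * K0)%nat).
    { destruct (Nat.eq_dec k (n * K0)) as [->|]; [|lia]. exfalso. apply Hno.
      rewrite Nat.div_mul by lia.
      rewrite Rdiv_diag, <- (Rdiv_diag (INR n)) by (apply not_0_INR; nia).
      rewrite Hends; auto. apply label_self. }
    assert (Hu : (k mod K0 < K0)%nat) by (apply Nat.mod_upper_bound; lia).
    assert (Hi : (k / K0 < n)%nat) by (apply Nat.Div0.div_lt_upper_bound; lia).
    destruct (Hslot (k / K0)%nat (INR k / INR (n * K0))) as [|]; auto; try tauto.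
    assert (Ek : INR n * (INR k / INR (n * K0)) = INR (k / K0) + INR (k mod K0) / INR K0).
    { rewrite <- (frac_refine n K0) by lia. do 3 f_equal. rewrite Nat.mul_comm. apply Nat.div_mod_eq. }
    rewrite Ek.
    assert (0 <= INR (k mod K0) / INR K0 < 1); [|lra].
    pose proof (lt_INR _ _ Hu). pose proof (pos_INR (k mod K0)).
    assert (0 < INR K0) by (apply lt_0_INR; lia).
    split; [apply Rle_mult_inv_pos; lra|].
    apply (Rmult_lt_reg_r (INR K0)); [lra|].
    unfold Rdiv. rewrite Rmult_assoc, Rinv_l, Rmult_1_r, Rmult_1_l by lra. lra.
  - apply holonomy_refine; auto. intros i u Hi Hu. unfold b.
    destruct (divmod_eq i u K0 Hu) as [-> _]. destruct (excluded_middle_informative _); auto.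
Qed.

(** Sweeping a δ-fine grid of points whose left, right and top sides sit at
    [x0] shows that the holonomy along its labelled bottom row is trivial. *)
Lemma grid_holonomy (Y : nat -> nat -> X) M b :
  (forall j j' k k', (j <= M)%nat -> (j' <= M)%nat -> (k <= M)%nat -> (k' <= M)%nat ->
     (j' = j \/ j' = S j) -> (k' = k \/ k' = S k) -> d (Y j k) (Y j' k') < delta) ->
  (forall j, (j <= M)%nat -> Y j 0%nat = x0 /\ Y j M = x0) ->
  (forall k, (k <= M)%nat -> Y M k = x0) ->
  (forall k, (k <= M)%nat -> label (Y 0%nat k) (b k)) ->
  b 0%nat = gone G -> b M = gone G ->
  holonomy b M = gone H.
Proof.
  intros Hclose Hsides Htop Hbot Hb0 HbM.
  destruct label_choice as [lab [Hlab Hlab0]].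
  set (L := fun j k => match j with O => b k | S _ => lab (Y j k) end).
  assert (HL : forall j k, (k <= M)%nat -> label (Y j k) (L j k))
    by (intros [|j] k Hk; simpl; auto).
  assert (Hends : forall j, (j <= M)%nat -> L j 0%nat = gone G /\ L j M = gone G).
  { intros [|j] Hj; simpl; auto. destruct (Hsides (S j) Hj) as [-> ->]. auto. }
  assert (Hrow : forall j, (j < M)%nat -> holonomy (L j) M = holonomy (L (S j)) M).
  { intros j Hj.
    pose proof (ladder (Y j) (Y (S j)) (L j) (L (S j)) M) as Hlad.
    destruct (Hends j ltac:(lia)) as [E1 E2]. destruct (Hends (S j) ltac:(lia)) as [E3 E4].
    rewrite E1, E2, E3, E4, ginv_one, gmul1l, phi_one, gmul1r, gmul1l in Hlad.
    apply Hlad.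
    - intros i Hi; split; apply HL; auto.
    - intros i Hi. repeat split; apply Hclose; lia.
    - intros i Hi. apply Hclose; lia. }
  assert (Hfrom_top : forall k, (k <= M)%nat -> holonomy (L (M - k)%nat) M = gone H).
  { induction k as [|k IH]; intro Hk.
    - rewrite Nat.sub_0_r. destruct M as [|M']; [reflexivity|].
      apply gprod_trivial. intros i Hi. simpl L.
      rewrite !Htop, Hlab0, gmulVl by lia. apply phi_one.
    - rewrite Hrow by lia. replace (S (M - S k)) with (M - k)%nat by lia. apply IH; lia. }
  pose proof (Hfrom_top M (le_n M)) as Hb. rewrite Nat.sub_diag in Hb. exact Hb.
Qed.

Lemma closed_chain_holonomy c n : S_chain c n -> c 0%nat = gone G -> c n = gone G ->
  holonomy c n = gone H.
Proof.
  intros Hc Hc0 Hcn.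
  destruct (Nat.eq_dec n 0) as [->|Hn0]; [reflexivity|].
  destruct (chain_path c n Hc ltac:(lia)) as [lp [Hlp [Hends Hslot]]].
  assert (Hlp0 : lp 0 = x0).
  { replace 0 with (INR 0 / INR n) by (simpl; field; apply not_0_INR; lia).
    rewrite Hends, Hc0, act_one by lia. reflexivity. }
  assert (Hlp1 : lp 1 = x0).
  { rewrite <- (Rdiv_diag (INR n)), Hends, Hcn, act_one by (lia || apply not_0_INR; lia).
    reflexivity. }
  destruct Hsc as [_ Hloop].
  destruct (Hloop lp Hlp (eq_trans Hlp0 (eq_sym Hlp1))) as [K [HK [HKbot [HKtop HKside]]]].
  rewrite Hlp0 in HKtop, HKside.
  destruct (square_unif_continuous X d Hmet K HK delta Hdl) as [rho [Hrho Hrho']].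
  destruct (fine_refinement rho n Hrho ltac:(lia)) as [K0 [HK0 HMr]].
  set (M := (n * K0)%nat) in HMr.
  assert (HM : (0 < M)%nat) by (unfold M; lia).
  destruct (chain_refinement c n lp K0 Hc ltac:(lia) HK0 Hends Hslot)
    as [b [Hb0 [HbM [Hblab Hbhol]]]].
  fold M in Hblab, HbM, Hbhol. rewrite <- Hbhol.
  assert (HMR : INR M <> 0) by (apply not_0_INR; lia).
  apply (grid_holonomy (fun j k => K (INR j / INR M) (INR k / INR M))); auto; try congruence.
  - intros. apply Hrho'; try apply in01_frac; auto; apply frac_close; auto.
  - intros j Hj. rewrite Rdiv_diag by auto. simpl INR. unfold Rdiv at 2. rewrite Rmult_0_l.
    apply HKside, in01_frac; auto.
  - intros k Hk. rewrite Rdiv_diag by auto. apply HKtop, in01_frac; auto.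
  - intros k Hk. simpl INR. unfold Rdiv at 1. rewrite Rmult_0_l, HKbot by (apply in01_frac; auto).
    apply Hblab; auto.
Qed.

Definition chain_app (c : nat -> G) (n : nat) (c' : nat -> G) (i : nat) : G :=
  if le_lt_dec i n then c i else c n ** c' (i - n)%nat.

Lemma chain_app_start c n c' : chain_app c n c' 0%nat = c 0%nat.
Proof. unfold chain_app. destruct (le_lt_dec 0 n); [reflexivity | lia]. Qed.

Lemma chain_app_end c n c' m : c' 0%nat = gone G -> chain_app c n c' (n + m) = c n ** c' m.
Proof.
  intro H0. unfold chain_app. destruct (le_lt_dec (n + m) n).
  - replace m with 0%nat by lia. rewrite Nat.add_0_r, H0, gmul1r. reflexivity.
  - do 2 f_equal. lia.
Qed.

Lemma chain_app_incr c n c' j : c' 0%nat = gone G ->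
  ginv G (chain_app c n c' (n + j)) ** chain_app c n c' (S (n + j)) = ginv G (c' j) ** c' (S j).
Proof.
  intro H0. unfold chain_app.
  destruct (le_lt_dec (n + j) n); destruct (le_lt_dec (S (n + j)) n); try lia.
  - replace j with 0%nat by lia. rewrite Nat.add_0_r, <- (gmul1r G (c n)) at 1.
    rewrite <- H0, incr_translate. do 3 f_equal. lia.
  - rewrite incr_translate. do 4 f_equal; lia.
Qed.

Lemma chain_app_S_chain c n c' m : S_chain c n -> S_chain c' m -> c' 0%nat = gone G ->
  S_chain (chain_app c n c') (n + m).
Proof.
  intros Hc Hc' H0 i Hi. destruct (le_lt_dec n i) as [Hni|Hin].
  - replace i with (n + (i - n))%nat by lia. rewrite chain_app_incr by auto. apply Hc'. lia.
  - unfold chain_app. destruct (le_lt_dec i n), (le_lt_dec (S i) n); try lia. apply Hc. lia.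
Qed.

Lemma holonomy_app c n c' m : c' 0%nat = gone G ->
  holonomy (chain_app c n c') (n + m) = holonomy c n ** holonomy c' m.
Proof.
  intro H0. unfold holonomy. rewrite gprod_add. f_equal.
  - apply gprod_ext. intros i Hi. unfold chain_app.
    destruct (le_lt_dec i n), (le_lt_dec (S i) n); try lia. reflexivity.
  - apply gprod_ext. intros j Hj. rewrite chain_app_incr by auto. reflexivity.
Qed.

Definition chain_rev (c : nat -> G) (m : nat) (j : nat) : G := ginv G (c m) ** c (m - j)%nat.

Lemma chain_rev_incr c m j : (j < m)%nat ->
  ginv G (chain_rev c m j) ** chain_rev c m (S j) =
  ginv G (ginv G (c (m - 1 - j)%nat) ** c (S (m - 1 - j))).
Proof.
  intro Hj. unfold chain_rev. rewrite incr_translate, incr_rev. do 4 f_equal; lia.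
Qed.

Lemma chain_rev_S_chain c m : S_chain c m -> S_chain (chain_rev c m) m.
Proof. intros Hc j Hj. rewrite chain_rev_incr by auto. apply inS_inv, Hc. lia. Qed.

Lemma holonomy_rev c m : S_chain c m -> holonomy (chain_rev c m) m = ginv H (holonomy c m).
Proof.
  intro Hc. unfold holonomy. rewrite <- gprod_inv. apply gprod_ext. intros j Hj.
  rewrite chain_rev_incr, phi_inv by (try apply Hc; lia). reflexivity.
Qed.

Lemma holonomy_endpoint c n c' m : S_chain c n -> S_chain c' m ->
  c 0%nat = gone G -> c' 0%nat = gone G -> c n = c' m -> holonomy c n = holonomy c' m.
Proof.
  intros Hc Hc' H0 H0' Hnm.
  assert (Hr0 : chain_rev c' m 0%nat = gone G)
    by (unfold chain_rev; rewrite Nat.sub_0_r; apply gmulVl).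
  pose proof (closed_chain_holonomy (chain_app c n (chain_rev c' m)) (n + m)) as Hloop.
  rewrite holonomy_app, holonomy_rev in Hloop by auto.
  assert (Hinv : ginv H (holonomy c' m) = ginv H (holonomy c n)).
  { apply ginv_unique, Hloop.
    - apply chain_app_S_chain; auto. apply chain_rev_S_chain; auto.
    - rewrite chain_app_start. auto.
    - rewrite chain_app_end by auto. unfold chain_rev.
      rewrite Nat.sub_diag, H0', gmul1r, Hnm. apply gmulVr. }
  rewrite <- (ginv_inv H (holonomy c n)), <- Hinv, ginv_inv. reflexivity.
Qed.

(** The extension theorem: a local homomorphism on [S] extends to a
    homomorphism on [Γ], namely the holonomy along any S-chain from the
    identity. *)
Lemma local_hom_extends : exists Psi : G -> H, is_hom G H Psi /\ forall s, inS s -> Psi s = phi s.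
Proof.
  assert (Hch : forall a, exists p : nat * (nat -> G),
            S_chain (snd p) (fst p) /\ snd p 0%nat = gone G /\ snd p (fst p) = a).
  { intro a. destruct (S_chain_exists a) as [c [n Hcn]]. exists (n, c). auto. }
  destruct (choice _ Hch) as [ch Hch'].
  set (Psi := fun a => holonomy (snd (ch a)) (fst (ch a))).
  assert (Hval : forall a c n, S_chain c n -> c 0%nat = gone G -> c n = a ->
            Psi a = holonomy c n).
  { intros a c n Hc Hc0 Hcn. destruct (Hch' a) as [A [B C]].
    apply holonomy_endpoint; auto. congruence. }
  exists Psi. split.
  - intros a a'.
    destruct (S_chain_exists a) as [c [n [Hc [Hc0 Hcn]]]].
    destruct (S_chain_exists a') as [c' [m [Hc' [Hc0' Hcm]]]].
    rewrite (Hval a c n), (Hval a' c' m), <- holonomy_app by auto.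
    apply Hval.
    + apply chain_app_S_chain; auto.
    + rewrite chain_app_start. auto.
    + rewrite chain_app_end by auto. congruence.
  - intros s Hs.
    assert (Hinc : ginv G (gone G) ** s = s) by (rewrite ginv_one; apply gmul1l).
    rewrite (Hval s (fun k => match k with O => gone G | S _ => s end) 1%nat); auto.
    + unfold holonomy. simpl. rewrite Hinc. apply gmul1l.
    + intros i Hi. replace i with 0%nat by lia. simpl. rewrite Hinc. auto.
Qed.

End LocalToGlobal.

(** For a proper action, the distances from [x0] to its orbit points have a
    gap above any radius [r]: only finitely many of them are at most [r + 1]. *)
Lemma orbit_gap (G : Group) (X : Type) (d : X -> X -> R) (act : G -> X -> X) (x0 : X) r :
  0 <= r -> proper_action G X d act ->
  exists eps, 0 < eps /\ forall a, d x0 (act a x0) < r + eps -> d x0 (act a x0) <= r.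
Proof.
  intros Hr Hp. destruct (Hp (r + 1) x0 ltac:(lra)) as [L HL].
  assert (Hgap : forall L' : list G, exists eps, 0 < eps <= 1 /\ forall a, In a L' ->
            d x0 (act a x0) <= r \/ r + eps <= d x0 (act a x0)).
  { induction L' as [|a0 L' [eps [Heps Hgap]]].
    - exists 1. split; [lra|]. intros a [].
    - destruct (Rle_or_lt (d x0 (act a0 x0)) r) as [Ha|Ha].
      + exists eps. split; auto. intros a [<-|Hin]; auto.
      + set (eps' := Rmin eps (d x0 (act a0 x0) - r)).
        assert (0 < eps') by (apply Rmin_pos; lra).
        assert (eps' <= eps) by apply Rmin_l. assert (eps' <= d x0 (act a0 x0) - r) by apply Rmin_r.
        exists eps'. split; [lra|]. intros a [<-|Hin]; [right; lra|].
        destruct (Hgap a Hin); [left | right]; lra. }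
  destruct (Hgap L) as [eps [Heps HL']]. exists eps. split; [lra|].
  intros a Ha. destruct (HL' a) as [?|?]; auto; [apply HL; lra | lra].
Qed.

Definition geometric (G : Group) (X : Type) (d : X -> X -> R) (act : G -> X -> X) (D : R) : Prop :=
  is_metric X d /\ length_space X d /\ simply_connected X d /\
  isometric_action G X d act /\ proper_action G X d act /\ quotient_diam_le G X d act D.

(** ** Multiplication tables *)

(** Position of [x] in [l], or [length l] if [x] does not occur. *)
Fixpoint index_of {T : Type} (x : T) (l : list T) : nat :=
  match l with
  | nil => O
  | y :: l' => if excluded_middle_informative (x = y) then O else S (index_of x l')
  end.

Lemma index_of_le {T} (x : T) l : (index_of x l <= length l)%nat.
Proof. induction l; simpl; auto. destruct (excluded_middle_informative _); lia. Qed.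

Lemma index_of_in {T} (x : T) l dflt : In x l ->
  (index_of x l < length l)%nat /\ nth (index_of x l) l dflt = x.
Proof.
  induction l as [|y l IH]; simpl; [tauto|]. intro Hin.
  destruct (excluded_middle_informative (x = y)) as [->|Hne]; [split; [lia | auto]|].
  destruct Hin as [->|Hin]; [tauto|]. destruct (IH Hin). split; [lia | auto].
Qed.

Lemma index_of_lt {T} (x : T) l : (index_of x l < length l)%nat -> In x l.
Proof.
  induction l as [|y l IH]; simpl; [lia|].
  destruct (excluded_middle_informative (x = y)); auto. intro. right. apply IH. lia.
Qed.

Lemma index_of_nth {T} (l : list T) i dflt : NoDup l -> (i < length l)%nat ->
  index_of (nth i l dflt) l = i.
Proof.
  revert i. induction l as [|a l IH]; simpl; intros i Hnd Hi; [lia|].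
  inversion Hnd as [|? ? Ha Hnd']; subst. destruct i as [|i].
  - destruct (excluded_middle_informative (a = a)); congruence.
  - destruct (excluded_middle_informative (nth i l dflt = a)) as [E|].
    + exfalso. apply Ha. rewrite <- E. apply nth_In. lia.
    + f_equal. apply IH; auto. lia.
Qed.

Lemma nth_map_seq (f : nat -> nat) k n : (k < n)%nat -> nth k (map f (seq 0 n)) O = f k.
Proof.
  intro Hk. rewrite (nth_indep _ _ (f O)) by (rewrite length_map, length_seq; auto).
  rewrite map_nth, seq_nth by auto. reflexivity.
Qed.

(** The multiplication table of [l = [s_0; ...; s_(k-1)]]: entry [i k + j]
    is the index of [s_i s_j] in [l], or [k] if the product is not in [l]. *)
Definition table (G : Group) (l : list G) : list nat :=
  map (fun p => index_of (nth (p / length l) l (gone G) ** nth (p mod length l) l (gone G)) l)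
      (seq 0 (length l * length l)).

Lemma table_nth (G : Group) (l : list G) i j : (i < length l)%nat -> (j < length l)%nat ->
  nth (i * length l + j) (table G l) O = index_of (nth i l (gone G) ** nth j l (gone G)) l.
Proof.
  intros Hi Hj. unfold table. rewrite nth_map_seq by nia.
  destruct (divmod_eq i j (length l) Hj) as [-> ->]. reflexivity.
Qed.

Lemma same_table (G G' : Group) (l : list G) (l' : list G') :
  NoDup l -> length l = length l' -> table G l = table G' l' ->
  forall i j m, (i < length l)%nat -> (j < length l)%nat -> (m < length l)%nat ->
  nth i l (gone G) ** nth j l (gone G) = nth m l (gone G) ->
  nth i l' (gone G') ** nth j l' (gone G') = nth m l' (gone G').
Proof.
  intros Hnd Hlen Ht i j m Hi Hj Hm E.
  pose proof (table_nth G l i j Hi Hj) as T1.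
  pose proof (table_nth G' l' i j ltac:(lia) ltac:(lia)) as T2.
  rewrite E, index_of_nth in T1 by auto. rewrite <- Hlen, <- Ht, T1 in T2.
  assert (Hlt : (index_of (nth i l' (gone G') ** nth j l' (gone G')) l' < length l')%nat)
    by (rewrite <- T2; lia).
  destruct (index_of_in _ _ (gone G') (index_of_lt _ _ Hlt)) as [_ Hnth].
  rewrite <- T2 in Hnth. auto.
Qed.

Definition has_code (D : R) (G : Group) (c : nat * list nat) : Prop :=
  exists (X : Type) (d : X -> X -> R) (act : G -> X -> X) (x0 : X) (l : list G),
    geometric G X d act D /\ NoDup l /\
    (forall a, Sigma G X d act (2 * D) x0 a <-> In a l) /\ c = (length l, table G l).

Lemma table_hom (D : R) (G G' : Group) (X : Type) (d : X -> X -> R) (act : G -> X -> X)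
    (x0 : X) (l : list G) (l' : list G') :
  0 <= D -> geometric G X d act D -> NoDup l ->
  (forall a, Sigma G X d act (2 * D) x0 a <-> In a l) ->
  length l = length l' -> table G l = table G' l' ->
  exists Psi : G -> G', is_hom G G' Psi /\
    forall i, (i < length l)%nat -> Psi (nth i l (gone G)) = nth i l' (gone G').
Proof.
  intros HD [Hmet [Hlen [Hsc [Hact [Hprop Hdiam]]]]] Hnd Hl Hlen' Ht.
  destruct (orbit_gap G X d act x0 (2 * D)) as [eps [Heps Hgap]]; auto; [lra|].
  set (phi := fun a => nth (index_of a l) l' (gone G')).
  destruct (local_hom_extends G X d act D (eps / 3) x0 Hmet Hlen Hsc Hact HD
              ltac:(lra) Hdiam ltac:(intros a Ha; apply Hgap; lra) G' phi)
    as [Psi [HPsi HPsiS]].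
  - intros s t Hs Ht' Hst. apply Hl in Hs, Ht', Hst. unfold phi.
    destruct (index_of_in s l (gone G) Hs) as [Is Ns].
    destruct (index_of_in t l (gone G) Ht') as [It Nt].
    destruct (index_of_in (s ** t) l (gone G) Hst) as [Ist Nst].
    symmetry. apply (same_table G G' l l'); auto. rewrite Ns, Nt, Nst. reflexivity.
  - exists Psi. split; auto. intros i Hi. rewrite HPsiS.
    + unfold phi. rewrite index_of_nth; auto.
    + apply Hl, nth_In. auto.
Qed.

(** Homomorphisms [G -> G' -> G] matching an enumeration [l] of [S] with
    a list [l'] compose to the identity, since they fix the generators. *)
Lemma table_roundtrip (D : R) (G G' : Group) (X : Type) (d : X -> X -> R) (act : G -> X -> X)
    (x0 : X) (l : list G) (l' : list G') (f : G -> G') (g : G' -> G) :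
  0 <= D -> geometric G X d act D -> (forall a, Sigma G X d act (2 * D) x0 a <-> In a l) ->
  length l = length l' -> is_hom G G' f -> is_hom G' G g ->
  (forall i, (i < length l)%nat -> f (nth i l (gone G)) = nth i l' (gone G')) ->
  (forall i, (i < length l')%nat -> g (nth i l' (gone G')) = nth i l (gone G)) ->
  forall a, g (f a) = a.
Proof.
  intros HD [Hmet [_ [Hsc [Hact [Hprop Hdiam]]]]] Hl Hll Hf Hg Hfn Hgn.
  destruct (orbit_gap G X d act x0 (2 * D)) as [eps [Heps Hgap]]; auto; [lra|].
  apply (hom_determined_by_S G X d act D (eps / 3) x0 Hmet Hsc Hact HD ltac:(lra) Hdiam
           ltac:(intros b Hb; apply Hgap; lra) G (fun a => g (f a)) (fun a => a)).
  - intros u v. rewrite Hf, Hg. reflexivity.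
  - intros u v. reflexivity.
  - intros s Hs. apply Hl in Hs. destruct (index_of_in s l (gone G) Hs) as [I Ns].
    rewrite <- Ns, Hfn, Hgn; auto; lia.
Qed.

Lemma same_code_iso (D : R) (G G' : Group) c : 0 <= D ->
  has_code D G c -> has_code D G' c -> group_iso G G'.
Proof.
  intros HD [X [d [act [x0 [l [Hg [Hnd [Hl Hc]]]]]]]]
             [X' [d' [act' [x0' [l' [Hg' [Hnd' [Hl' Hc']]]]]]]].
  rewrite Hc in Hc'. injection Hc' as E1 E2.
  destruct (table_hom D G G' X d act x0 l l' HD Hg Hnd Hl E1 E2) as [P [HP HPn]].
  destruct (table_hom D G' G X' d' act' x0' l' l HD Hg' Hnd' Hl' (eq_sym E1) (eq_sym E2))
    as [Q [HQ HQn]].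
  pose proof (table_roundtrip D G G' X d act x0 l l' P Q HD Hg Hl E1 HP HQ HPn HQn) as QP.
  pose proof (table_roundtrip D G' G X' d' act' x0' l' l Q P HD Hg' Hl' (eq_sym E1) HQ HP HQn HPn)
    as PQ.
  exists P. split; [exact HP | split].
  - intros a b E. rewrite <- (QP a), <- (QP b), E. reflexivity.
  - intro y. exists (Q y). auto.
Qed.

(** ** Counting codes *)

Fixpoint all_lists (b L : nat) : list (list nat) :=
  match L with
  | O => nil :: nil
  | S L' => flat_map (fun x => map (cons x) (all_lists b L')) (seq 0 b)
  end.

Lemma length_flat_map_sum {A B} (f : A -> list B) l :
  length (flat_map f l) = list_sum (map (fun x => length (f x)) l).
Proof. induction l; simpl; auto. rewrite length_app, IHl. reflexivity. Qed.

Lemma list_sum_le {A} (f g : A -> nat) l : (forall x, In x l -> (f x <= g x)%nat) ->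
  (list_sum (map f l) <= list_sum (map g l))%nat.
Proof.
  induction l as [|a l IH]; simpl; intro Hfg; auto.
  specialize (IH (fun x h => Hfg x (or_intror h))). specialize (Hfg a (or_introl eq_refl)). lia.
Qed.

Lemma all_lists_length b L : length (all_lists b L) = (b ^ L)%nat.
Proof.
  induction L as [|L IH]; simpl; auto. rewrite length_flat_map_sum.
  rewrite (map_ext _ (fun _ => (b ^ L)%nat)) by (intro; rewrite length_map; auto).
  clear IH. generalize (b ^ L)%nat as c. intro c.
  assert (Hc : forall l : list nat, list_sum (map (fun _ => c) l) = (length l * c)%nat)
    by (induction l; simpl; auto; lia).
  rewrite Hc, length_seq. reflexivity.
Qed.

Lemma all_lists_in b L T : length T = L -> (forall x, In x T -> (x < b)%nat) -> In T (all_lists b L).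
Proof.
  revert T. induction L as [|L IH]; intros T HT Hb.
  - destruct T; [left; auto | simpl in HT; lia].
  - destruct T as [|x T]; [simpl in HT; lia|]. simpl. apply in_flat_map. exists x. split.
    + apply in_seq. specialize (Hb x (or_introl eq_refl)). lia.
    + apply in_map, IH; [simpl in HT; lia|]. intros; apply Hb; right; auto.
Qed.

Definition codes (N : nat) : list (nat * list nat) :=
  flat_map (fun k => map (fun t => (k, t)) (all_lists (S k) (k * k))) (seq 0 (S N)).

(** [(k+1)^(k²) <= 2^(k³) <= 2^((2k)³)]. *)
Lemma codes_length N : (length (codes N) <= qbound N)%nat.
Proof.
  unfold codes, qbound. rewrite length_flat_map_sum. apply list_sum_le. intros k _.
  rewrite length_map, all_lists_length.
  assert (S k <= 2 ^ k)%nat by (apply Nat.pow_gt_lin_r; lia).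
  apply Nat.le_trans with ((2 ^ k) ^ (k * k))%nat; [apply Nat.pow_le_mono_l; auto|].
  rewrite <- Nat.pow_mul_r. apply Nat.pow_le_mono_r; [lia|]. simpl. nia.
Qed.

Lemma admissible_code N D G : admissible N D G -> exists c, has_code D G c /\ In c (codes N).
Proof.
  intros [X [d [act [Hmet [Hlen [Hsc [Hact [Hprop [Hdiam [x [l0 [Hl0len Hl0]]]]]]]]]]]].
  set (inSigma := fun a => if excluded_middle_informative (Sigma G X d act (2 * D) x a)
                           then true else false).
  set (l := nodup (fun a b => excluded_middle_informative (a = b)) (filter inSigma l0)).
  assert (Hl : forall a, Sigma G X d act (2 * D) x a <-> In a l).
  { intro a. unfold l, inSigma. rewrite nodup_In, filter_In.
    destruct (excluded_middle_informative _) as [Hs|Hs].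
    - split; [intro; split; auto | auto].
    - split; [contradiction | intros [_ Hf]; discriminate]. }
  assert (Hll : (length l <= N)%nat).
  { eapply Nat.le_trans; [|exact Hl0len]. apply NoDup_incl_length; [apply NoDup_nodup|].
    intros a Ha. apply Hl0, Hl, Ha. }
  exists (length l, table G l). split.
  - exists X, d, act, x, l.
    split; [exact (conj Hmet (conj Hlen (conj Hsc (conj Hact (conj Hprop Hdiam))))) |].
    split; [apply NoDup_nodup | split; [exact Hl | reflexivity]].
  - apply in_flat_map. exists (length l). split; [apply in_seq; lia|].
    apply in_map, all_lists_in.
    + unfold table. rewrite length_map, length_seq. reflexivity.
    + intros y Hy. unfold table in Hy. apply in_map_iff in Hy. destruct Hy as [p [<- _]].
      pose proof (index_of_le (nth (p / length l) l (gone G) ** nth (p mod length l) l (gone G)) l).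
      lia.
Qed.

Definition unit_group : Group.
Proof.
  refine (MkGroup unit (fun _ _ => tt) tt (fun _ => tt) _ _ _ _ _);
    intros; repeat match goal with a : unit |- _ => destruct a end; reflexivity.
Defined.

Lemma code_representatives D (cs : list (nat * list nat)) : exists Gs : nat -> Group,
  forall i G, has_code D G (nth i cs (O, nil)) -> has_code D (Gs i) (nth i cs (O, nil)).
Proof.
  exists (fun i => epsilon (inhabits unit_group) (fun G => has_code D G (nth i cs (O, nil)))).
  intros i G HG. apply (epsilon_spec _ (fun G => has_code D G (nth i cs (O, nil)))).
  exists G. exact HG.
Qed.

Theorem mainTheorem2 (N : nat) (D : R) (hN : (1 <= N)%nat) (hD : 0 < D) :
  exists (n : nat) (Gs : nat -> Group),
    (n <= qbound N)%nat /\
    forall G : Group, admissible N D G ->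
      exists i, (i < n)%nat /\ group_iso G (Gs i).
Proof.
  destruct (code_representatives D (codes N)) as [Gs HGs].
  exists (length (codes N)), Gs. split; [apply codes_length|].
  intros G HG. destruct (admissible_code N D G HG) as [c [Hc Hin]].
  destruct (In_nth _ _ (O, nil) Hin) as [i [Hi Hic]].
  rewrite <- Hic in Hc. exists i. split; auto.
  apply (same_code_iso D G (Gs i) (nth i (codes N) (O, nil))); [lra | exact Hc | exact (HGs i G Hc)].
Qed.
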